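(* Let $P$ be a well-ordered phaser and suppose $P\to Q$. Then $\neg(Q\prec P)$.
   Context: A view is a record $v=(\mathrm{sp}(v),\mathrm{wp}(v),\mathrm{mode}(v))$ with $\mathrm{sp}(v),\mathrm{wp}(v)\in\mathbb{N}$ and $\mathrm{mode}(v)\in\{\mathtt{SW},\mathtt{SO},\mathtt{WO}\}$. For a view or mode, $\mathrm{CanSignal}$ means the mode is $\mathtt{SW}$ or $\mathtt{SO}$, and $\mathrm{CanWait}$ means the mode is $\mathtt{SW}$ or $\mathtt{WO}$. A phaser $P$ is a finite partial map from task identifiers to views. For views, $v_1\prec v_2$ iff $\mathrm{CanSignal}(v_1)$, $\mathrm{sp}(v_1)<\mathrm{wp}(v_2)$ and $\mathrm{CanWait}(v_2)$; $v_1\unrhd v_2$ iff $\mathrm{mode}(v_1)=\mathtt{WO}$ or $\mathrm{sp}(v_1)\ge\mathrm{wp}(v_2)$ or $\mathrm{mode}(v_2)=\mathtt{SO}$. For phasers, $P\prec Q$ iff there exist $t\in\mathrm{dom}\,P$, $t'\in\mathrm{dom}\,Q$ with $P(t)\prec Q(t')$; $P\unrhd Q$ iff $P(t)\unrhd Q(t')$ for all $t\in\mathrm{dom}\,P$, $t'\in\mathrm{dom}\,Q$. $P$ is well-ordered iff $P\unrhd P$. Reduction $P\to_t^{o}Q$ is defined by four rules. Signal: if $P(t)=v$, $\mathrm{CanSignal}(v)$, and ($\mathrm{mode}(v)=\mathtt{SW}\Rightarrow\mathrm{wp}(v)=\mathrm{sp}(v)$), then $Q=P[t\mapsto v']$ with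 $v'$ equal to $v$ except $\mathrm{sp}(v')=\mathrm{sp}(v)+1$. Wait: if $P(t)=v$, $\mathrm{CanWait}(v)$, ($\mathrm{mode}(v)=\mathtt{SW}\Rightarrow\mathrm{wp}(v)+1=\mathrm{sp}(v)$), and $\mathrm{Sync}(P,t)$, meaning that every $t'\in\mathrm{dom}\,P$ with $\mathrm{CanSignal}(P(t'))$ has $\mathrm{sp}(P(t'))>\mathrm{wp}(v)$, then $Q=P[t\mapsto v']$ with $v'$ equal to $v$ except $\mathrm{wp}(v')=\mathrm{wp}(v)+1$. Register$(t',r)$: if $t'\notin\mathrm{dom}\,P$, $P(t)=v$, ($\mathrm{CanWait}(r)\Rightarrow\mathrm{CanWait}(v)$) and ($\mathrm{CanSignal}(r)\Rightarrow\mathrm{CanSignal}(v)$), then $Q=P[t'\mapsto(\mathrm{sp}(v),\mathrm{wp}(v),r)]$. Drop: if $t\in\mathrm{dom}\,P$, then $Q$ is $P$ with $t$ removed. $P\to Q$ means $P\to_t^{o}Q$ for some $t,o$. *)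

From mathcomp Require Import all_boot.
From mathcomp Require Import finmap.
Set Implicit Arguments. Unset Strict Implicit. Unset Printing Implicit Defensive.
Local Open Scope fmap_scope.

Inductive mode := SW | SO | WO.

Record view := mkView { sp : nat; wp : nat; vmode : mode }.

Definition CanSignalM (m : mode) : Prop := m = SW \/ m = SO.
Definition CanWaitM (m : mode) : Prop := m = SW \/ m = WO.
Definition CanSignal (v : view) : Prop := CanSignalM (vmode v).
Definition CanWait (v : view) : Prop := CanWaitM (vmode v).

Definition tid := nat.

Definition phaser := {fmap tid -> view}.

Definition view_prec (v1 v2 : view) : Prop :=
  CanSignal v1 /\ sp v1 < wp v2 /\ CanWait v2.

Definition view_ge (v1 v2 : view) : Prop :=
  vmode v1 = WO \/ wp v2 <= sp v1 \/ vmode v2 = SO.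

Definition phaser_prec (P Q : phaser) : Prop :=
  exists t t' v v', P.[? t] = Some v /\ Q.[? t'] = Some v' /\ view_prec v v'.

Definition phaser_ge (P Q : phaser) : Prop :=
  forall t t' v v', P.[? t] = Some v -> Q.[? t'] = Some v' -> view_ge v v'.

Definition well_ordered (P : phaser) : Prop := phaser_ge P P.

Definition Sync (P : phaser) (t : tid) : Prop :=
  forall v, P.[? t] = Some v ->
  forall t' v', P.[? t'] = Some v' -> CanSignal v' -> wp v < sp v'.

Inductive op := OSignal | OWait | ORegister (t' : tid) (r : mode) | ODrop.

Inductive reduces (P : phaser) : tid -> op -> phaser -> Prop :=
| red_signal t v :
    P.[? t] = Some v -> CanSignal v ->
    (vmode v = SW -> wp v = sp v) ->
    reduces P t OSignal P.[t <- mkView (sp v).+1 (wp v) (vmode v)]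
| red_wait t v :
    P.[? t] = Some v -> CanWait v ->
    (vmode v = SW -> (wp v).+1 = sp v) ->
    Sync P t ->
    reduces P t OWait P.[t <- mkView (sp v) (wp v).+1 (vmode v)]
| red_register t t' r v :
    P.[? t'] = None -> P.[? t] = Some v ->
    (CanWaitM r -> CanWait v) -> (CanSignalM r -> CanSignal v) ->
    reduces P t (ORegister t' r) P.[t' <- mkView (sp v) (wp v) r]
| red_drop t :
    t \in domf P ->
    reduces P t ODrop P.[~ t].

Definition step (P Q : phaser) : Prop := exists t o, reduces P t o Q.

From mathcomp Require Import all_boot.
From mathcomp Require Import finmap.
Local Open Scope fmap_scope.

(* A reduction never lowers the signal phase of a signaller: Signal raises one,
   Register copies an existing signaller's phases, Wait and Drop change none.
   If [Q(t) ≺ P(t')], the signaller of [P] below [Q(t)] would then precede the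
   waiter [P(t')] in [P] itself, which well-ordering forbids. *)

Lemma view_ge_signal_wait {v v' : view} :
  CanSignal v -> CanWait v' -> view_ge v v' -> wp v' <= sp v.
Proof.
rewrite /CanSignal /CanWait /CanSignalM /CanWaitM /view_ge.
case: (vmode v) (vmode v') => [] [];
  by move=> [] // _ [] // _ [|[|]].
Qed.

Lemma reduces_signaller_bounded {P Q : phaser} {t o t1 w} :
  reduces P t o Q -> Q.[? t1] = Some w -> CanSignal w ->
  exists t0 v, [/\ P.[? t0] = Some v, CanSignal v & sp v <= sp w].
Proof.
case=> [t' v Pv Sv _ | t' v Pv _ _ _ | t' t'' r v _ Pv _ Sr | t' _].
- rewrite fnd_set; case: eqP => [_ [<-] | _ Qw Sw]; last by exists t1, w.
  by exists t', v.
- rewrite fnd_set; case: eqP => [_ [<-] | _ Qw Sw]; last by exists t1, w.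
  by exists t', v.
- rewrite fnd_set; case: eqP => [_ [<-] Sw | _ Qw Sw]; last by exists t1, w.
  by exists t', v; split=> //; apply: Sr.
- by rewrite fnd_rem; case: ifP => // _ Qw Sw; exists t1, w.
Qed.

Theorem theorem2 (P Q : phaser) :
  well_ordered P -> step P Q -> ~ phaser_prec Q P.
Proof.
move=> wo_P [t [o red]] [t1 [t' [w [v' [Qw [Pv' [Sw [lt_w_v' Wv']]]]]]]].
have [t0 [v [Pv Sv le_v_w]]] := reduces_signaller_bounded red Qw Sw.
have le_v'_v := view_ge_signal_wait Sv Wv' (wo_P _ _ _ _ Pv Pv').
by have := leq_ltn_trans le_v'_v (leq_ltn_trans le_v_w lt_w_v'); rewrite ltnn.
Qed.
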